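(* Let $(X,\tau_1,\tau_2)$ be a bitopological space, $i,j\in\{1,2\}$, $i\neq j$, which is $(i,j)_1$-nearly paralindelöf, $(i,j)$-semiregular and a $j$-$P$-space. If $X$ is $(i,j)$-weakly Lindelöf, then $X$ is $(i,j)$-almost Lindelöf.
   Context: $(X,\tau_1,\tau_2)$ is a bitopological space and $i,j\in\{1,2\}$, $i\neq j$. For $k\in\{1,2\}$, $k\text{-}\mathrm{int}$ and $k\text{-}\mathrm{cl}$ denote interior and closure with respect to $\tau_k$; ''$k$-open'' means $\tau_k$-open. A set $A$ is $(i,j)$-regular open if $A=i\text{-}\mathrm{int}(j\text{-}\mathrm{cl}(A))$. $X$ is $(i,j)$-semiregular if the $(i,j)$-regular open sets form a base for $\tau_i$. A family $\mathcal V$ refines $\mathcal U$ if each member of $\mathcal V$ is contained in some member of $\mathcal U$; a family is a cover of $X$ if its union is $X$. A family is $k$-locally countable if every $x\in X$ has a $k$-open neighbourhood meeting at most countably many of its members. $X$ is a $k$-$P$-space if every intersection of countably many $k$-open sets is $k$-open. $X$ is $(i,j)_1$-nearly paralindelöf if every cover of $X$ by $(i,j)$-regular open sets has a refinement which is a cover of $X$ by $i$-open sets and which is $j$-locally countable. $X$ is $(i,j)$-weakly Lindelöf if every cover $\{U_\alpha:\alpha\in\Delta\}$ of $X$ by $i$-open sets has a countable subfamily $\{U_{\alpha_n}:n\in\mathbb N\}$ with $X=j\text{-}\mathrm{cl}(\bigcup_n U_{\alpha_n})$; it is $(i,j)$-almost Lindelöf if every such cover has a countable subfamily with $X=\bigcup_n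 j\text{-}\mathrm{cl}(U_{\alpha_n})$. *)

From Stdlib Require Import Classical.

Set Implicit Arguments.

Definition set (X : Type) := X -> Prop.
Definition family (X : Type) := set X -> Prop.

Definition is_topology (X : Type) (tau : family X) : Prop :=
  tau (fun _ => True) /\ tau (fun _ => False) /\
  (forall F : family X, (forall U, F U -> tau U) ->
     tau (fun x => exists U, F U /\ U x)) /\
  (forall U V, tau U -> tau V -> tau (fun x => U x /\ V x)).

Definition interior (X : Type) (tau : family X) (A : set X) : set X :=
  fun x => exists U, tau U /\ (forall y, U y -> A y) /\ U x.

Definition closure (X : Type) (tau : family X) (A : set X) : set X :=
  fun x => forall U, tau U -> U x -> exists y, U y /\ A y.

Definition set_eq (X : Type) (A B : set X) : Prop := forall x, A x <-> B x.

Definition regular_open (X : Type) (ti tj : family X) (A : set X) : Prop :=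
  set_eq A (interior ti (closure tj A)).

Definition semiregular (X : Type) (ti tj : family X) : Prop :=
  (forall A, regular_open ti tj A -> ti A) /\
  (forall U x, ti U -> U x ->
     exists B, regular_open ti tj B /\ B x /\ (forall y, B y -> U y)).

Definition countable_family (X : Type) (F : family X) : Prop :=
  exists f : {U : set X | F U} -> nat, forall a b, f a = f b -> a = b.

Definition refines (X : Type) (V U : family X) : Prop :=
  forall A, V A -> exists B, U B /\ (forall x, A x -> B x).

Definition covers (X : Type) (F : family X) : Prop :=
  forall x, exists U, F U /\ U x.

Definition locally_countable (X : Type) (tk : family X) (F : family X) : Prop :=
  forall x, exists W, tk W /\ W x /\
    countable_family (fun U => F U /\ exists y, W y /\ U y).

Definition P_space (X : Type) (tk : family X) : Prop :=
  forall U : nat -> set X, (forall n, tk (U n)) -> tk (fun x => forall n, U n x).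

Definition nearly_paralindelof1 (X : Type) (ti tj : family X) : Prop :=
  forall U : family X, (forall A, U A -> regular_open ti tj A) -> covers U ->
    exists V : family X, refines V U /\ covers V /\ (forall A, V A -> ti A) /\
      locally_countable tj V.

Definition weakly_lindelof (X : Type) (ti tj : family X) : Prop :=
  forall (Delta : Type) (U : Delta -> set X),
    (forall a, ti (U a)) -> (forall x, exists a, U a x) ->
    exists s : nat -> Delta,
      forall x, closure tj (fun y => exists n, U (s n) y) x.

Definition almost_lindelof (X : Type) (ti tj : family X) : Prop :=
  forall (Delta : Type) (U : Delta -> set X),
    (forall a, ti (U a)) -> (forall x, exists a, U a x) ->
    exists s : nat -> Delta,
      forall x, exists n, closure tj (U (s n)) x.

From Stdlib Require Import Classical ClassicalEpsilon.

(* If x lies in no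
   j-cl(U_n), pick j-open W_n around x missing U_n; in a j-P-space their
   intersection is still a j-open neighbourhood of x, and it misses the whole
   union of the U_n, so x is not in its j-closure either. *)

Lemma not_in_closure_open_nbhd (X : Type) (tk : family X) (A : set X) (x : X) :
  ~ closure tk A x -> exists W, tk W /\ W x /\ forall y, W y -> ~ A y.
Proof.
  intro Hx; apply NNPP; intro Hno; apply Hx; intros W HW Wx.
  apply NNPP; intro Hmeet; apply Hno.
  exists W; split; [exact HW | split; [exact Wx |]].
  intros y Wy Ay; apply Hmeet; exists y; split; assumption.
Qed.

Lemma P_space_closure_countable_union (X : Type) (tk : family X)
  (U : nat -> set X) (x : X) :
  P_space tk -> closure tk (fun y => exists n, U n y) x ->
  exists n, closure tk (U n) x.
Proof.
  intros HP Hcl; apply NNPP; intro Hnone.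
  assert (Hnbhd : forall n, exists W, tk W /\ W x /\ forall y, W y -> ~ U n y).
  { intro n; apply not_in_closure_open_nbhd; intro Hn; apply Hnone; exists n; exact Hn. }
  destruct (choice _ Hnbhd) as [W HW].
  destruct (Hcl (fun y => forall n, W n y)) as [y [Wy [n Uny]]].
  - apply HP; intro n; apply HW.
  - intro n; apply HW.
  - exact (proj2 (proj2 (HW n)) y (Wy n) Uny).
Qed.

Lemma weakly_lindelof_P_space_almost_lindelof (X : Type) (ti tj : family X) :
  P_space tj -> weakly_lindelof ti tj -> almost_lindelof ti tj.
Proof.
  intros HP HW Delta U HUo HUc.
  destruct (HW Delta U HUo HUc) as [s Hs].
  exists s; intro x.
  exact (P_space_closure_countable_union _ _ (fun n => U (s n)) x HP (Hs x)).
Qed.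

Theorem mainTheorem6 (X : Type) (tau1 tau2 : family X) (i j : nat)
  (Htop1 : is_topology tau1) (Htop2 : is_topology tau2)
  (Hi : i = 1 \/ i = 2) (Hj : j = 1 \/ j = 2) (Hij : i <> j) :
  let ti := if Nat.eqb i 1 then tau1 else tau2 in
  let tj := if Nat.eqb j 1 then tau1 else tau2 in
  nearly_paralindelof1 ti tj -> semiregular ti tj -> P_space tj ->
  weakly_lindelof ti tj -> almost_lindelof ti tj.
Proof.
  intros ti tj _ _ HP HW.
  exact (weakly_lindelof_P_space_almost_lindelof _ _ _ HP HW).
Qed.
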